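(* Let $n,t\ge 0$ be integers with $n\ge 3t+1$, let $k=\lfloor t/5\rfloor+1$, and let $\mathcal P=[1:n-t]$. Let $E:\mathcal P\times\mathcal P\to\{0,1\}$ be symmetric ($E_{i,j}=E_{j,i}$; loops $E_{i,i}=1$ are allowed and count as edges). Let $i^\star\in\mathcal P$ and suppose there is a set $\mathcal C\subseteq\mathcal P\setminus\{i^\star\}$ such that $E_{i,i^\star}=1$ for all $i\in\mathcal C$, $\sum_{j\in\mathcal P}E_{i,j}\ge n-2t$ for all $i\in\mathcal C$, and $|\mathcal C|\ge n-2t-1$. Let $\mathcal D=\{i\in\mathcal P\setminus\{i^\star\}: \sum_{j\in\mathcal C}E_{i,j}\ge k\}$. Then $|\mathcal D|\ge n-9t/4-1$. *)

From mathcomp Require Import all_boot all_order all_algebra.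
Set Implicit Arguments. Unset Strict Implicit. Unset Printing Implicit Defensive.

(** Count the edges between [C] and the vertices [j <> istar] in two ways.
    Each vertex of [C] has at least [n - 2t - 1] neighbours other than
    [istar], so there are at least [|C| (n - 2t - 1)] such edges. A vertex of
    [D] has at most [|C|] neighbours in [C], any other vertex at most
    [k - 1 <= t/5], and there are [n - t - 1] vertices besides [istar]. If
    [|D| = n - 2t - 1 - x] with [x > 0], the two counts give
    [|C| x <= (x + t) t/5], and [|C| >= n - 2t - 1 >= t] forces [x <= t/4]. *)

From mathcomp Require Import all_boot all_order all_algebra.
From mathcomp Require Import zify lra.
Import Order.TTheory GRing.Theory Num.Theory.

Set Implicit Arguments.
Unset Strict Implicit.
Unset Printing Implicit Defensive.

Lemma sum_le_threshold_split (T : finType) (B : {pred T}) (f : T -> nat)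
    (a k : nat) :
  {in B, forall j, f j <= a} ->
  \sum_(j in B) f j <= #|[pred j in B | k <= f j]| * a
                       + (#|B| - #|[pred j in B | k <= f j]|) * k.-1.
Proof.
move=> le_fa; set H := [pred j in B | _].
rewrite (bigID (fun j => k <= f j)) /=.
have card_light : #|[pred j in B | ~~ (k <= f j)]| = #|B| - #|H|.
  have -> : #|H| = #|[predI B & [pred j | k <= f j]]| by apply: eq_card.
  rewrite -(cardID [pred j | k <= f j] B) addKn.
  by apply: eq_card => j; rewrite !inE andbC.
apply: leq_add.
  rewrite -[#|H|]/#|[pred j | (j \in B) && (k <= f j)]| -sum_nat_const.
  by apply: leq_sum => j /andP[/le_fa].
rewrite -card_light -sum_nat_const; apply: leq_sum => j /andP[_].
by rewrite -ltnNge; lia.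
Qed.

Section CommonNeighbours.

Variables (T : finType) (E : rel T) (s : T) (C : {set T}) (m k : nat).
Hypothesis E_sym : symmetric E.
Hypothesis C_adj_s : {in C, forall i, E i s}.
Hypothesis C_deg : {in C, forall i, m < \sum_j E i j}.

Let D := [set j | (j != s) && (k <= \sum_(i in C) E j i)].

Lemma C_deg_off_s : {in C, forall i, m <= \sum_(j | j != s) E i j}.
Proof.
move=> i iC; move: (C_deg iC).
by rewrite (bigD1 s) //= C_adj_s.
Qed.

Lemma neighbours_in_C_le (j : T) : \sum_(i in C) E j i <= #|C|.
Proof.
by rewrite -sum1_card; apply: leq_sum => i _; case: (E j i).
Qed.

Lemma edges_C_double_count :
  #|C| * m <= #|D| * #|C| + (#|T|.-1 - #|D|) * k.-1.
Proof.
have lower : #|C| * m <= \sum_(j | j != s) \sum_(i in C) E j i.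
  rewrite exchange_big -sum_nat_const; apply: leq_sum => i iC /=.
  by under eq_bigr => j _ do rewrite E_sym; exact: C_deg_off_s.
have -> : #|D| = #|[pred j in predC1 s | k <= \sum_(i in C) E j i]|.
  by apply: eq_card => j; rewrite inE.
apply: (leq_trans lower); rewrite -(cardC1 s).
exact: sum_le_threshold_split k (fun j _ => neighbours_in_C_le j).
Qed.

End CommonNeighbours.

Lemma few_light_vertices (m t c d q : nat) :
  t <= m -> m <= c -> 5 * q <= t ->
  c * m <= d * c + (m + t - d) * q -> 4 * m <= 4 * d + t.
Proof.
move=> le_tm le_mc le_qt count.
have [|lt_dm] := leqP m d; first lia.
have : c * (m - d) <= (m - d + t) * q by rewrite mulnBr; nia.
nia.
Qed.

Theorem lemma8 (n t : nat) (E : 'I_(n - t) -> 'I_(n - t) -> bool)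
  (istar : 'I_(n - t)) (C : {set 'I_(n - t)}) :
  (3 * t + 1 <= n)%N ->
  (forall i j, E i j = E j i) ->
  istar \notin C ->
  (forall i, i \in C -> E i istar) ->
  (forall i, i \in C -> (n - 2 * t <= \sum_(j < n - t) E i j)%N) ->
  (n - 2 * t - 1 <= #|C|)%N ->
  let k := (t %/ 5 + 1)%N in
  let D := [set i | (i != istar) && (k <= \sum_(j in C) E i j)%N] in
  ((n%:R - 9%:R * t%:R / 4%:R - 1 : rat) <= (#|D|)%:R)%R.
Proof.
move=> le_3t_n E_sym _ C_adj C_deg le_C; cbv zeta.
set k := (t %/ 5 + 1)%N; set D := [set i | _].
have deg : {in C, forall i, n - 2 * t - 1 < \sum_j E i j}.
  by move=> i iC; apply: leq_trans (C_deg i iC); lia.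
have := edges_C_double_count k E_sym C_adj deg.
rewrite -/D card_ord /k addn1 -subn1 => count.
have le_q : 5 * (t %/ 5) <= t by rewrite mulnC leq_divM.
have bound : 4 * (n - 2 * t - 1) <= 4 * #|D| + t.
  apply: (few_light_vertices _ le_C le_q); first lia.
  by have -> : n - 2 * t - 1 + t = n - t - 1 by lia.
have : ((4 * n)%N%:R <= (4 * #|D| + 9 * t + 4)%N%:R :> rat)%R.
  by rewrite ler_nat; lia.
rewrite !natrD; lra.
Qed.
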